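(* Let $X$ be an Alexandroff $T_0$-space and let $\varphi:\mathbb{R}\times X\rightarrow X$ be a flow. Then $\varphi$ is trivial, i.e. $\varphi(t,x)=x$ for every $t\in\mathbb{R}$ and every $x\in X$.
   Context: An Alexandroff space is a topological space in which arbitrary intersections of open sets are open. A flow on a topological space $X$ is a continuous map $\varphi:\mathbb{R}\times X\to X$ (with $\mathbb{R}$ carrying its usual topology and $\mathbb{R}\times X$ the product topology) such that $\varphi(0,x)=x$ and $\varphi(s+t,x)=\varphi(s,\varphi(t,x))$ for all $s,t\in\mathbb{R}$, $x\in X$. *)

From HB Require Import structures.
From mathcomp Require Import all_boot all_order all_algebra.
From mathcomp Require Import all_classical all_reals all_analysis.
Set Implicit Arguments. Unset Strict Implicit. Unset Printing Implicit Defensive.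
Import Order.TTheory GRing.Theory Num.Theory.
Import numFieldTopology.Exports numFieldNormedType.Exports.
Local Open Scope classical_set_scope.
Local Open Scope ring_scope.

Definition alexandroff_space (X : topologicalType) : Prop :=
  forall (F : set (set X)), (forall A, F A -> open A) ->
    open (\bigcap_(A in F) A).

Definition is_flow (R : realType) (X : topologicalType) (phi : R * X -> X) : Prop :=
  continuous phi /\
  (forall x, phi (0, x) = x) /\
  (forall s t x, phi (s + t, x) = phi (s, phi (t, x))).

From HB Require Import structures.
From mathcomp Require Import all_boot all_order all_algebra.
From mathcomp Require Import all_classical all_reals all_analysis.
Import Order.TTheory GRing.Theory Num.Theory.
Import numFieldTopology.Exports numFieldNormedType.Exports.
Local Open Scope classical_set_scope.
Local Open Scope ring_scope.

(* Write [specializes y x] when every open set containing x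
   also contains y (the specialization preorder); in a T0 space it is
   antisymmetric, and in an Alexandroff space each point x has an open
   neighbourhood consisting of points specializing x (the intersection of
   all open sets around x).  Joint continuity of the flow at (t, x) yields a
   time-window of radius e around t which works simultaneously for all
   points specializing x.  Taking t = 0 and the minimal neighbourhood of x,
   every phi(s, x) with |s| < e specializes x; applying the monotone map
   phi(s, -) to phi(-s, x) <= x gives the reverse relation, so T0 forces
   phi(s, x) = x for |s| < e.  Finally the set of times fixing x is closed
   under addition and contains (-e, e), hence by the Archimedean property
   it is all of R. *)

Definition specializes (X : topologicalType) (y x : X) : Prop :=
  forall A : set X, open A -> A x -> A y.
Arguments specializes {X}.

Lemma nbhs_specializes (X : topologicalType) (x y : X) (Q : set X) :
  specializes y x -> nbhs x Q -> Q y.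
Proof.
by move=> yx; rewrite nbhsE => -[A [oA Ax] AQ]; apply: AQ; apply: yx.
Qed.
Arguments nbhs_specializes {X x y Q}.

Lemma specializes_antisym (X : topologicalType) (x y : X) :
  kolmogorov_space X -> specializes y x -> specializes x y -> x = y.
Proof.
move=> T0 yx xy; apply/eqP/negPn/negP => /T0 [A [[]|[]]].
- by rewrite inE => /(nbhs_specializes yx) Ay; rewrite inE.
- by rewrite inE => /(nbhs_specializes xy) Ax; rewrite inE.
Qed.

Lemma alexandroff_minimal_nbhs (X : topologicalType) (x : X) :
  alexandroff_space X ->
  exists U : set X, [/\ open U, U x & forall y, U y -> specializes y x].
Proof.
move=> alex; exists (\bigcap_(A in [set A : set X | open A /\ A x]) A).
split; first by apply: alex => A [].
- by move=> A [].
- by move=> y Uy A oA Ax; apply: Uy.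
Qed.
Arguments alexandroff_minimal_nbhs {X}.

Lemma continuous_uniform_specializes (R : realType) (X : topologicalType)
    (phi : R * X -> X) (t : R) (x : X) (B : set X) :
  continuous phi -> open B -> B (phi (t, x)) ->
  exists2 e : R, 0 < e &
    forall s y, `|t - s| < e -> specializes y x -> B (phi (s, y)).
Proof.
move=> cphi oB Btx.
have : nbhs (t, x) (phi @^-1` B).
  by apply: (cphi (t, x)); apply: open_nbhs_nbhs.
case=> -[P Q] /= [/nbhs_ballP [e e0 Pe] Qx] PQ.
exists e => // s y ts yx; apply: (PQ (s, y)); split => /=.
- by apply: Pe; rewrite -ball_normE.
- exact: (nbhs_specializes yx).
Qed.
Arguments continuous_uniform_specializes {R X phi t x B}.

(* A subset of R closed under addition and containing a neighbourhood of 0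
   is all of R: t is a sum of n+1 copies of the small time t/(n+1). *)
Lemma additive_closed_nbhs0_total (R : realType) (P : set R) (e : R) :
  0 < e -> (forall s, `|s| < e -> P s) ->
  (forall s u, P s -> P u -> P (s + u)) -> forall t, P t.
Proof.
move=> e0 Psmall PD t.
have [n ltn] : exists n : nat, `|t| / n.+1%:R < e.
  exists (Num.Def.archi_bound (`|t| / e)).
  rewrite ltr_pdivrMr ?ltr0Sn // mulrC -ltr_pdivrMr //.
  apply: lt_le_trans (archi_boundP _) _; first by rewrite divr_ge0 // ltW.
  by rewrite ler_nat.
pose u := t / n.+1%:R.
have Pu : P u by apply: Psmall; rewrite normrM normfV normr_nat.
have Pmul : forall k : nat, P (u *+ k.+1).
  by elim=> [|k IH]; rewrite ?mulr1n // mulrS; apply: PD.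
by have := Pmul n; rewrite -mulr_natr mulfVK // pnatr_eq0.
Qed.

Section AlexandroffFlow.
Variables (R : realType) (X : topologicalType) (phi : R * X -> X).
Hypothesis alex : alexandroff_space X.
Hypothesis T0 : kolmogorov_space X.
Hypothesis flow : is_flow phi.

Lemma flow_specializes (s : R) {x y : X} :
  specializes y x -> specializes (phi (s, y)) (phi (s, x)).
Proof.
move=> yx A oA Asx.
have [e e0 He] := continuous_uniform_specializes flow.1 oA Asx.
by apply: He => //; rewrite subrr normr0.
Qed.

Lemma flow_locally_stationary (x : X) :
  exists2 e : R, 0 < e & forall s, `|s| < e -> phi (s, x) = x.
Proof.
have [_ [phi0 phiD]] := flow.
have [U [oU Ux Uspec]] := alexandroff_minimal_nbhs x alex.
have U0x : U (phi (0, x)) by rewrite phi0.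
have [e e0 He] := continuous_uniform_specializes flow.1 oU U0x.
have below : forall s, `|s| < e -> specializes (phi (s, x)) x.
  move=> s ltse; apply: Uspec; apply: He; last by move=> A.
  by rewrite sub0r normrN.
exists e => // s ltse; apply: specializes_antisym => //; last exact: below.
have := flow_specializes s (below (- s) _); rewrite normrN => /(_ ltse).
by rewrite -phiD subrr phi0.
Qed.

End AlexandroffFlow.
Arguments flow_locally_stationary {R X phi}.

Theorem mainTheorem4 (R : realType) (X : topologicalType)
  (phi : R * X -> X) :
  alexandroff_space X -> kolmogorov_space X -> is_flow phi ->
  forall (t : R) (x : X), phi (t, x) = x.
Proof.
move=> alex T0 flow t x.
have [_ [_ phiD]] := flow.
have [e e0 small] := flow_locally_stationary alex T0 flow x.
have fixedD : forall s u, phi (s, x) = x -> phi (u, x) = x -> phi (s + u, x) = x.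
  by move=> s u Ps Pu; rewrite phiD Pu Ps.
exact: (@additive_closed_nbhs0_total R (fun s => phi (s, x) = x) e e0 small fixedD t).
Qed.
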